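(* Let $\omega$ be a rectilinearly-convex obstacle. Then there exists a minimum skeleton $S^*$ for $\omega$ such that each edge of $S^*$ is a maximum length visibility edge of $\omega$.
   Context: An obstacle $\omega$ is a simple polygon in $\mathbb{R}^2$ (a closed, bounded polygonal region without holes whose boundary does not intersect itself), assumed in general position (no three of its vertices are collinear). $\omega$ is rectilinear if each boundary edge is horizontal or vertical, and a rectilinear obstacle is rectilinearly-convex if any two points of $\omega$ can be joined by a shortest rectilinear path (made of horizontal and vertical segments, of minimum $\ell_1$ length) contained in $\omega$. A corner point of a rectilinear path is a point where a horizontal and a vertical segment of the path meet. A set $S$ of closed line segments is inside $\omega$ if the union of its elements is contained in $\omega$. Such an $S$ is a skeleton for $\omega$ if for every pair of points $p,q$ not in the interior of $\omega$ such that every shortest rectilinear path between $p$ and $q$ with at most one corner point meets the interior of $\omega$, each such path intersects some element of $S$. A minimum skeleton is a skeleton with the smallest possible number of segments. A visibility edge is a line segment contained in $\omega$; it is a maximum length visibility edge if it cannot be extended at either end while remaining contained in $\omega$ (i.e. it extends as far as possible in both directions to the boundary of $\omega$). *)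

From Stdlib Require Import Reals List Arith.
Open Scope R_scope.

Definition pt := (R * R)%type.

Definition seg (a b : pt) (p : pt) : Prop :=
  exists t, 0 <= t <= 1 /\
    fst p = fst a + t * (fst b - fst a) /\
    snd p = snd a + t * (snd b - snd a).

(* basic topology of the plane (max-norm balls; same topology as Euclidean) *)
Definition ball_in (p : pt) (e : R) (q : pt) : Prop :=
  Rabs (fst q - fst p) < e /\ Rabs (snd q - snd p) < e.
Definition interior (A : pt -> Prop) (p : pt) : Prop :=
  exists e, 0 < e /\ forall q, ball_in p e q -> A q.
Definition boundary (A : pt -> Prop) (p : pt) : Prop :=
  forall e, 0 < e ->
    (exists q, ball_in p e q /\ A q) /\ (exists q, ball_in p e q /\ ~ A q).
Definition is_closed (A : pt -> Prop) : Prop :=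
  forall p, (forall e, 0 < e -> exists q, ball_in p e q /\ A q) -> A p.
Definition is_bounded (A : pt -> Prop) : Prop :=
  exists M, forall p, A p -> Rabs (fst p) <= M /\ Rabs (snd p) <= M.

Definition vtx (vs : list pt) (i : nat) : pt :=
  nth (Nat.modulo i (length vs)) vs (0, 0).
Definition pedge (vs : list pt) (i : nat) : pt -> Prop :=
  seg (vtx vs i) (vtx vs (S i)).

Definition simple_polygon (vs : list pt) : Prop :=
  (3 <= length vs)%nat /\ NoDup vs /\
  forall i j, (i < length vs)%nat -> (j < length vs)%nat -> i <> j ->
    (j = Nat.modulo (S i) (length vs) ->
       forall p, (pedge vs i p /\ pedge vs j p) <-> p = vtx vs j) /\
    (j <> Nat.modulo (S i) (length vs) -> i <> Nat.modulo (S j) (length vs) ->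
       forall p, ~ (pedge vs i p /\ pedge vs j p)).

Definition general_position (vs : list pt) : Prop :=
  forall i j k, (i < length vs)%nat -> (j < length vs)%nat -> (k < length vs)%nat ->
    i <> j -> j <> k -> i <> k ->
    (fst (vtx vs j) - fst (vtx vs i)) * (snd (vtx vs k) - snd (vtx vs i))
    - (snd (vtx vs j) - snd (vtx vs i)) * (fst (vtx vs k) - fst (vtx vs i)) <> 0.

(* omega is the closed bounded region bounded by the polygon vs: a closed,
   bounded set with nonempty interior whose topological boundary is exactly
   the polygonal curve (by the Jordan curve theorem this is exactly the
   curve together with its inside). *)
Definition polygon_region (vs : list pt) (omega : pt -> Prop) : Prop :=
  is_closed omega /\ is_bounded omega /\
  (forall p, boundary omega p <-> exists i, (i < length vs)%nat /\ pedge vs i p) /\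
  (exists p, interior omega p).

Definition obstacle (omega : pt -> Prop) : Prop :=
  exists vs, simple_polygon vs /\ general_position vs /\ polygon_region vs omega.

Definition rectilinear_poly (vs : list pt) : Prop :=
  forall i, (i < length vs)%nat ->
    fst (vtx vs i) = fst (vtx vs (S i)) \/ snd (vtx vs i) = snd (vtx vs (S i)).

Definition rectilinear_obstacle (omega : pt -> Prop) : Prop :=
  exists vs, simple_polygon vs /\ general_position vs /\
    polygon_region vs omega /\ rectilinear_poly vs.

(* rectilinear paths: start point a, then the list of subsequent points;
   consecutive points are horizontally or vertically aligned *)
Fixpoint axis_path (a : pt) (l : list pt) : Prop :=
  match l with
  | nil => True
  | b :: l' => (fst a = fst b \/ snd a = snd b) /\ axis_path b l'
  end.

Definition l1dist (a b : pt) : R := Rabs (fst a - fst b) + Rabs (snd a - snd b).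

Fixpoint path_len (a : pt) (l : list pt) : R :=
  match l with
  | nil => 0
  | b :: l' => l1dist a b + path_len b l'
  end.

Fixpoint on_path (a : pt) (l : list pt) (x : pt) : Prop :=
  match l with
  | nil => x = a
  | b :: l' => seg a b x \/ on_path b l' x
  end.

Definition rect_path (p q : pt) (l : list pt) : Prop :=
  axis_path p l /\ last l p = q.

Definition shortest_rect_path (p q : pt) (l : list pt) : Prop :=
  rect_path p q l /\ forall l', rect_path p q l' -> path_len p l <= path_len p l'.

Definition rect_convex (omega : pt -> Prop) : Prop :=
  rectilinear_obstacle omega /\
  forall p q, omega p -> omega q ->
    exists l, shortest_rect_path p q l /\ forall x, on_path p l x -> omega x.

(* The shortest rectilinear paths from p to q with at most one corner point
   are exactly the two "L-shaped" paths below (they coincide with the straight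
   segment pq when p and q are axis-aligned). *)
Definition Lpath1 (p q : pt) (x : pt) : Prop :=
  seg p (fst q, snd p) x \/ seg (fst q, snd p) q x.
Definition Lpath2 (p q : pt) (x : pt) : Prop :=
  seg p (fst p, snd q) x \/ seg (fst p, snd q) q x.

Definition meets (A B : pt -> Prop) : Prop := exists x, A x /\ B x.

Definition hits (S : list (pt * pt)) (P : pt -> Prop) : Prop :=
  exists s, In s S /\ meets (seg (fst s) (snd s)) P.

Definition inside (omega : pt -> Prop) (S : list (pt * pt)) : Prop :=
  forall s, In s S -> forall x, seg (fst s) (snd s) x -> omega x.

Definition skeleton (omega : pt -> Prop) (S : list (pt * pt)) : Prop :=
  inside omega S /\
  forall p q, ~ interior omega p -> ~ interior omega q ->
    meets (Lpath1 p q) (interior omega) -> meets (Lpath2 p q) (interior omega) ->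
    hits S (Lpath1 p q) /\ hits S (Lpath2 p q).

Definition minimum_skeleton (omega : pt -> Prop) (S : list (pt * pt)) : Prop :=
  skeleton omega S /\
  forall S', skeleton omega S' -> (length S <= length S')%nat.

(* maximum length visibility edge: nondegenerate segment in omega that cannot
   be extended at either end while staying in omega *)
Definition max_vis_edge (omega : pt -> Prop) (a b : pt) : Prop :=
  a <> b /\ (forall x, seg a b x -> omega x) /\
  forall e, 0 < e ->
    ~ (forall x, seg (fst a - e * (fst b - fst a), snd a - e * (snd b - snd a)) b x -> omega x) /\
    ~ (forall x, seg a (fst b + e * (fst b - fst a), snd b + e * (snd b - snd a)) x -> omega x).

(* The boundary of omega is the union of its polygon edges, and a segment
   from a point outside the interior to an interior point crosses the
   boundary; hence every L-shaped path from a non-interior point that enters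
   the interior meets a polygon edge, the polygon edges form a skeleton, and a
   minimum skeleton exists. Since omega is closed and bounded, every segment
   inside omega lies in a maximum length visibility edge (a segment reduced to
   a point is first thickened, inside a small ball or along a polygon edge).
   Replacing each segment of a minimum skeleton by such an edge keeps it inside
   omega and only enlarges what it hits, so the result is again a skeleton of
   the same size. *)

From Stdlib Require Import Reals List Lia Lra Classical Wf_nat.
(* Imported after Reals so that its [interior] shadows the one of Rtopology. *)
Open Scope R_scope.

Definition R_closed (F : R -> Prop) : Prop :=
  forall t, (forall d, 0 < d -> exists s, Rabs (s - t) < d /\ F s) -> F t.

Lemma maximal_interval_right (F : R -> Prop) :
  R_closed F -> (exists B, forall s, F s -> s <= B) ->
  (forall s, 0 <= s <= 1 -> F s) ->
  exists t2, 1 <= t2 /\ (forall s, 0 <= s <= t2 -> F s) /\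
    forall e, 0 < e -> ~ (forall s, 0 <= s <= t2 + e -> F s).
Proof.
  intros Hcl [B HB] H01.
  set (U := fun t => 1 <= t /\ forall s, 0 <= s <= t -> F s).
  assert (HU1 : U 1) by (split; [lra | exact H01]).
  assert (HUb : bound U) by (exists B; intros t [Ht HF]; apply HB, HF; lra).
  destruct (completeness U HUb (ex_intro _ 1 HU1)) as [t2 [Hub Hlub]].
  assert (Ht2 : 1 <= t2) by (apply Hub, HU1).
  assert (Hbelow : forall s, 0 <= s < t2 -> F s).
  { intros s Hs. apply NNPP. intros HFs.
    assert (Hs_ub : is_upper_bound U s).
    { intros u [_ Hu]. apply Rnot_lt_le. intros Hsu. apply HFs, Hu. lra. }
    specialize (Hlub s Hs_ub). lra. }
  assert (HFt2 : F t2).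
  { apply Hcl. intros d Hd. exists (t2 - Rmin d 1 / 2).
    pose proof (Rmin_l d 1). pose proof (Rmin_r d 1).
    assert (0 < Rmin d 1) by (apply Rmin_glb_lt; lra).
    split; [apply Rabs_def1; lra | apply Hbelow; lra]. }
  exists t2. split; [exact Ht2|]. split.
  - intros s Hs. destruct (Req_dec s t2) as [->|Hne]; [exact HFt2 | apply Hbelow; lra].
  - intros e He Hall. assert (U (t2 + e)) as Hu by (split; [lra | exact Hall]).
    specialize (Hub _ Hu). lra.
Qed.

Lemma R_closed_reflect (F : R -> Prop) : R_closed F -> R_closed (fun t => F (1 - t)).
Proof.
  intros Hcl t Ht. apply Hcl. intros d Hd. destruct (Ht d Hd) as [s [Hs HFs]].
  exists (1 - s). split; [|exact HFs].
  replace (1 - s - (1 - t)) with (- (s - t)) by ring. rewrite Rabs_Ropp. exact Hs.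
Qed.

Lemma maximal_interval (F : R -> Prop) :
  R_closed F -> (exists B, forall s, F s -> Rabs s <= B) ->
  (forall s, 0 <= s <= 1 -> F s) ->
  exists t1 t2, t1 <= 0 /\ 1 <= t2 /\ (forall s, t1 <= s <= t2 -> F s) /\
    (forall e, 0 < e -> ~ (forall s, t1 - e <= s <= t2 -> F s)) /\
    (forall e, 0 < e -> ~ (forall s, t1 <= s <= t2 + e -> F s)).
Proof.
  intros Hcl [B HB] H01.
  destruct (maximal_interval_right F Hcl) as [t2 [Ht2 [HF2 Hmax2]]]; [|exact H01|].
  { exists B. intros s Hs. pose proof (Rle_abs s). pose proof (HB s Hs). lra. }
  destruct (maximal_interval_right (fun t => F (1 - t))) as [u [Hu [HF1 Hmax1]]].
  - apply R_closed_reflect, Hcl.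
  - exists (1 + B). intros s Hs. pose proof (Rle_abs (- (1 - s))).
    rewrite Rabs_Ropp in *. pose proof (HB _ Hs). lra.
  - intros s Hs. apply H01. lra.
  - exists (1 - u), t2. repeat split; try lra.
    + intros s Hs. destruct (Rle_or_lt s 1).
      * replace s with (1 - (1 - s)) by ring. apply HF1. lra.
      * apply HF2. lra.
    + intros e He Hall. apply (Hmax1 e He). intros s Hs. apply Hall. lra.
    + intros e He Hall. apply (Hmax2 e He). intros s Hs. apply Hall. lra.
Qed.

Lemma R_crossing_point (P : R -> Prop) : P 0 -> ~ P 1 ->
  exists ts, 0 <= ts <= 1 /\ forall d, 0 < d ->
    (exists t, 0 <= t <= 1 /\ Rabs (t - ts) < d /\ P t) /\
    (exists t, 0 <= t <= 1 /\ Rabs (t - ts) < d /\ ~ P t).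
Proof.
  intros HP0 HP1.
  set (V := fun t => 0 <= t <= 1 /\ P t).
  assert (HV0 : V 0) by (split; [lra | exact HP0]).
  assert (HVb : bound V) by (exists 1; intros t [Ht _]; lra).
  destruct (completeness V HVb (ex_intro _ 0 HV0)) as [ts [Hub Hlub]].
  assert (Hts0 : 0 <= ts) by (apply Hub, HV0).
  assert (Hts1 : ts <= 1) by (apply Hlub; intros t [Ht _]; lra).
  exists ts. split; [lra|]. intros d Hd. split.
  - apply NNPP. intros Hnone.
    assert (Hlow : is_upper_bound V (ts - d)).
    { intros t [Ht HPt]. apply Rnot_lt_le. intros Hlt.
      assert (t <= ts) by (apply Hub; split; assumption).
      apply Hnone. exists t. split; [exact Ht|]. split; [apply Rabs_def1; lra | exact HPt]. }
    specialize (Hlub _ Hlow). lra.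
  - destruct (Rlt_or_le ts 1) as [Hlt|Hge].
    + pose proof (Rmin_l (ts + d / 2) 1). pose proof (Rmin_r (ts + d / 2) 1).
      set (t := Rmin (ts + d / 2) 1) in *.
      assert (ts < t) by (apply Rmin_glb_lt; lra).
      exists t. split; [lra|]. split; [apply Rabs_def1; lra|].
      intros HPt. assert (t <= ts) by (apply Hub; split; [lra | exact HPt]). lra.
    + exists 1. split; [lra|]. split; [|exact HP1].
      replace (1 - ts) with 0 by lra. rewrite Rabs_R0. exact Hd.
Qed.

Definition line_at (a b : pt) (s : R) : pt :=
  (fst a + s * (fst b - fst a), snd a + s * (snd b - snd a)).

Lemma line_at_0 a b : line_at a b 0 = a.
Proof. destruct a; unfold line_at; simpl; f_equal; ring. Qed.

Lemma line_at_1 a b : line_at a b 1 = b.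
Proof. destruct a, b; unfold line_at; simpl; f_equal; ring. Qed.

Lemma line_at_line_at a b t1 t2 u :
  line_at (line_at a b t1) (line_at a b t2) u = line_at a b (t1 + u * (t2 - t1)).
Proof. unfold line_at; simpl; f_equal; ring. Qed.

Lemma line_at_inj a b t1 t2 : a <> b -> line_at a b t1 = line_at a b t2 -> t1 = t2.
Proof.
  intros Hab Heq. apply NNPP. intros Ht. apply Hab.
  assert (Hd : t1 - t2 <> 0) by lra.
  injection Heq as E1 E2. destruct a as [a1 a2], b as [b1 b2]; simpl in *.
  f_equal; apply Rminus_diag_uniq_sym; apply (Rmult_eq_reg_l (t1 - t2)); try assumption; lra.
Qed.

Lemma seg_iff a b x : seg a b x <-> exists t, 0 <= t <= 1 /\ x = line_at a b t.
Proof.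
  split.
  - intros [t [Ht [X1 X2]]]. exists t. split; [exact Ht|].
    destruct x; unfold line_at; simpl in *; f_equal; assumption.
  - intros [t [Ht ->]]. exists t. split; [exact Ht | split; reflexivity].
Qed.

Lemma seg_line_at_iff a b t1 t2 x : t1 < t2 ->
  seg (line_at a b t1) (line_at a b t2) x <-> exists s, t1 <= s <= t2 /\ x = line_at a b s.
Proof.
  intros Ht. rewrite seg_iff. split.
  - intros [u [Hu ->]]. exists (t1 + u * (t2 - t1)). split; [split; nra|].
    apply line_at_line_at.
  - intros [s [Hs ->]]. exists ((s - t1) / (t2 - t1)).
    assert (Hu : (s - t1) / (t2 - t1) * (t2 - t1) = s - t1) by (field; lra).
    split; [split; nra|]. rewrite line_at_line_at, Hu. f_equal; ring.
Qed.

Lemma seg_degenerate a x : seg a a x -> x = a.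
Proof.
  rewrite seg_iff. intros [t [_ ->]]. destruct a; unfold line_at; simpl; f_equal; ring.
Qed.

Lemma seg_start a b : seg a b a.
Proof. rewrite seg_iff. exists 0. split; [lra | symmetry; apply line_at_0]. Qed.

Lemma seg_subseg a b x y : seg a b x -> seg a x y -> seg a b y.
Proof.
  intros [u [Hu [X1 X2]]] [v [Hv [Y1 Y2]]].
  exists (v * u). split; [split; nra|]. rewrite Y1, Y2, X1, X2. split; ring.
Qed.

Lemma line_at_continuous a b e : 0 < e -> exists d, 0 < d /\
  forall s t, Rabs (s - t) < d -> ball_in (line_at a b t) e (line_at a b s).
Proof.
  intros He.
  set (K := Rabs (fst b - fst a) + Rabs (snd b - snd a) + 1).
  pose proof (Rabs_pos (fst b - fst a)). pose proof (Rabs_pos (snd b - snd a)).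
  assert (HK : 0 < K) by (unfold K; lra).
  exists (e / K). split; [apply Rdiv_lt_0_compat; lra|].
  intros s t Hst. assert (HeK : e / K * K = e) by (field; lra).
  pose proof (Rabs_pos (s - t)).
  unfold ball_in, line_at; simpl. split.
  - replace (fst a + s * (fst b - fst a) - (fst a + t * (fst b - fst a)))
      with ((s - t) * (fst b - fst a)) by ring.
    rewrite Rabs_mult. assert (Rabs (fst b - fst a) <= K) by (unfold K; lra). nra.
  - replace (snd a + s * (snd b - snd a) - (snd a + t * (snd b - snd a)))
      with ((s - t) * (snd b - snd a)) by ring.
    rewrite Rabs_mult. assert (Rabs (snd b - snd a) <= K) by (unfold K; lra). nra.
Qed.

Lemma Rabs_affine_param_bound a d M s : d <> 0 -> Rabs (a + s * d) <= M ->
  Rabs s <= (M + Rabs a) / Rabs d.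
Proof.
  intros Hd H.
  assert (Hpos : 0 < Rabs d) by (apply Rabs_pos_lt, Hd).
  pose proof (Rabs_triang (a + s * d) (- a)) as T.
  rewrite Rabs_Ropp in T. replace (a + s * d + - a) with (s * d) in T by ring.
  rewrite Rabs_mult in T.
  apply (Rmult_le_reg_r (Rabs d)); [exact Hpos|].
  unfold Rdiv. rewrite Rmult_assoc, Rinv_l; lra.
Qed.

Lemma line_at_param_bounded a b M : a <> b -> exists B, forall s,
  Rabs (fst (line_at a b s)) <= M -> Rabs (snd (line_at a b s)) <= M -> Rabs s <= B.
Proof.
  intros Hab. destruct (Req_dec (fst b - fst a) 0) as [E1|E1].
  - destruct (Req_dec (snd b - snd a) 0) as [E2|E2].
    + exfalso. apply Hab. destruct a, b; simpl in *; f_equal; lra.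
    + exists ((M + Rabs (snd a)) / Rabs (snd b - snd a)). intros s _ Hs.
      apply Rabs_affine_param_bound; assumption.
  - exists ((M + Rabs (fst a)) / Rabs (fst b - fst a)). intros s Hs _.
    apply Rabs_affine_param_bound; assumption.
Qed.

Lemma max_vis_edge_line_at (omega : pt -> Prop) c d : c <> d ->
  (forall s, 0 <= s <= 1 -> omega (line_at c d s)) ->
  (forall e, 0 < e -> ~ (forall s, - e <= s <= 1 -> omega (line_at c d s))) ->
  (forall e, 0 < e -> ~ (forall s, 0 <= s <= 1 + e -> omega (line_at c d s))) ->
  max_vis_edge omega c d.
Proof.
  intros Hcd Hin Hleft Hright.
  split; [exact Hcd|]. split.
  - intros x Hx. apply seg_iff in Hx as [s [Hs ->]]. apply Hin, Hs.
  - intros e He. split; intros Hall.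
    + apply (Hleft e He). intros s Hs. apply Hall.
      replace (fst c - e * (fst d - fst c), snd c - e * (snd d - snd c))
        with (line_at c d (- e)) by (unfold line_at; f_equal; ring).
      rewrite <- (line_at_1 c d) at 2.
      apply seg_line_at_iff; [lra|]. exists s. split; [exact Hs | reflexivity].
    + apply (Hright e He). intros s Hs. apply Hall.
      replace (fst d + e * (fst d - fst c), snd d + e * (snd d - snd c))
        with (line_at c d (1 + e)) by (destruct c, d; unfold line_at; simpl; f_equal; ring).
      rewrite <- (line_at_0 c d) at 1.
      apply seg_line_at_iff; [lra|]. exists s. split; [exact Hs | reflexivity].
Qed.

Lemma seg_in_max_vis_edge (omega : pt -> Prop) :
  is_closed omega -> is_bounded omega ->
  forall a b, a <> b -> (forall x, seg a b x -> omega x) ->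
  exists c d, max_vis_edge omega c d /\ forall x, seg a b x -> seg c d x.
Proof.
  intros Hcl [M HM] a b Hab Hin.
  set (F := fun s => omega (line_at a b s)).
  destruct (maximal_interval F) as [t1 [t2 [Ht1 [Ht2 [HF [Hmax1 Hmax2]]]]]].
  - intros t Ht. apply Hcl. intros e He.
    destruct (line_at_continuous a b e He) as [d [Hd Hnear]].
    destruct (Ht d Hd) as [s [Hs HFs]]. exists (line_at a b s). split; [apply Hnear, Hs | exact HFs].
  - destruct (line_at_param_bounded a b M Hab) as [B HB].
    exists B. intros s Hs. apply HB; apply (HM _ Hs).
  - intros s Hs. apply Hin, seg_iff. exists s. split; [exact Hs | reflexivity].
  - assert (Hreparam : forall s, line_at (line_at a b t1) (line_at a b t2) s
                                  = line_at a b (t1 + s * (t2 - t1)))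
      by (intros; apply line_at_line_at).
    assert (Hunreparam : forall s, exists u, u * (t2 - t1) = s - t1 /\ s = t1 + u * (t2 - t1)).
    { intros s. exists ((s - t1) / (t2 - t1)). split; field; lra. }
    exists (line_at a b t1), (line_at a b t2). split.
    + apply max_vis_edge_line_at.
      * intros Heq. apply line_at_inj in Heq; [lra | exact Hab].
      * intros s Hs. rewrite Hreparam. apply HF. nra.
      * intros e He Hall. apply (Hmax1 (e * (t2 - t1))); [nra|]. intros s Hs.
        destruct (Hunreparam s) as [u [Hu ->]]. unfold F. rewrite <- Hreparam.
        apply Hall. split; nra.
      * intros e He Hall. apply (Hmax2 (e * (t2 - t1))); [nra|]. intros s Hs.
        destruct (Hunreparam s) as [u [Hu ->]]. unfold F. rewrite <- Hreparam.
        apply Hall. split; nra.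
    + intros x Hx. apply seg_iff in Hx as [s [Hs ->]].
      apply seg_line_at_iff; [lra|]. exists s. split; [lra | reflexivity].
Qed.

Lemma ball_in_center p e : 0 < e -> ball_in p e p.
Proof. intros He. unfold ball_in. rewrite !Rminus_diag, Rabs_R0. lra. Qed.

Lemma ball_in_trans p q r e1 e2 :
  ball_in p e1 q -> ball_in q e2 r -> ball_in p (e1 + e2) r.
Proof.
  unfold ball_in. intros [A1 A2] [B1 B2].
  pose proof (Rabs_triang (fst r - fst q) (fst q - fst p)).
  pose proof (Rabs_triang (snd r - snd q) (snd q - snd p)).
  replace (fst r - fst q + (fst q - fst p)) with (fst r - fst p) in * by ring.
  replace (snd r - snd q + (snd q - snd p)) with (snd r - snd p) in * by ring.
  split; lra.
Qed.

Lemma interior_sub (A : pt -> Prop) p : interior A p -> A p.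
Proof. intros [r [Hr Hball]]. apply Hball, ball_in_center, Hr. Qed.

Lemma not_interior_near (A : pt -> Prop) p : ~ interior A p ->
  forall e, 0 < e -> exists q, ball_in p e q /\ ~ A q.
Proof.
  intros Hn e He. apply NNPP. intros Hno. apply Hn. exists e. split; [exact He|].
  intros q Hq. apply NNPP. intros Hq'. apply Hno. exists q. split; assumption.
Qed.

Lemma boundary_sub (A : pt -> Prop) p : is_closed A -> boundary A p -> A p.
Proof. intros Hcl Hb. apply Hcl. intros e He. apply (proj1 (Hb e He)). Qed.

Lemma boundary_of_interior_limit (A : pt -> Prop) y :
  (forall e, 0 < e -> exists q, ball_in y e q /\ interior A q) ->
  (forall e, 0 < e -> exists q, ball_in y e q /\ ~ interior A q) ->
  boundary A y.
Proof.
  intros Hin Hout e He. split.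
  - destruct (Hin e He) as [q [Hq Hiq]]. exists q. split; [exact Hq | apply interior_sub, Hiq].
  - destruct (Hout (e / 2)) as [q [Hq Hniq]]; [lra|].
    destruct (not_interior_near A q Hniq (e / 2)) as [r [Hr HAr]]; [lra|].
    exists r. split; [|exact HAr].
    replace e with (e / 2 + e / 2) by field. apply ball_in_trans with q; assumption.
Qed.

Lemma seg_crosses_boundary (A : pt -> Prop) p x :
  ~ interior A p -> interior A x -> exists y, seg p x y /\ boundary A y.
Proof.
  intros Hp Hx.
  destruct (R_crossing_point (fun t => ~ interior A (line_at p x t))) as [ts [Hts Hcross]].
  - rewrite line_at_0. exact Hp.
  - rewrite line_at_1. intros Hn. apply Hn, Hx.
  - exists (line_at p x ts). split.
    + apply seg_iff. exists ts. split; [exact Hts | reflexivity].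
    + apply boundary_of_interior_limit; intros e He;
        destruct (line_at_continuous p x e He) as [d [Hd Hnear]];
        destruct (Hcross d Hd) as [[t [_ [Htd HPt]]] [t' [_ [Htd' HPt']]]].
      * exists (line_at p x t'). split; [apply Hnear, Htd' | apply NNPP, HPt'].
      * exists (line_at p x t). split; [apply Hnear, Htd | exact HPt].
Qed.

Lemma two_piece_path_crosses_boundary (A : pt -> Prop) p m q :
  ~ interior A p ->
  meets (fun z => seg p m z \/ seg m q z) (interior A) ->
  meets (fun z => seg p m z \/ seg m q z) (boundary A).
Proof.
  intros Hp [x [[Hx|Hx] Hix]].
  - destruct (seg_crosses_boundary A p x Hp Hix) as [y [Hy Hby]].
    exists y. split; [left; apply seg_subseg with x; assumption | exact Hby].
  - destruct (classic (interior A m)) as [Hm|Hm].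
    + destruct (seg_crosses_boundary A p m Hp Hm) as [y [Hy Hby]].
      exists y. split; [left; exact Hy | exact Hby].
    + destruct (seg_crosses_boundary A m x Hm Hix) as [y [Hy Hby]].
      exists y. split; [right; apply seg_subseg with x; assumption | exact Hby].
Qed.

Definition polygon_edges (vs : list pt) : list (pt * pt) :=
  map (fun i => (vtx vs i, vtx vs (S i))) (seq 0 (length vs)).

Lemma polygon_edges_skeleton (vs : list pt) (omega : pt -> Prop) :
  polygon_region vs omega -> skeleton omega (polygon_edges vs).
Proof.
  intros [Hcl [_ [Hbd _]]]. split.
  - intros s Hs x Hx. apply in_map_iff in Hs as [i [<- Hi]]. apply in_seq in Hi.
    apply boundary_sub; [exact Hcl|]. apply Hbd. exists i. split; [lia | exact Hx].
  - assert (Hhit : forall p q m, ~ interior omega p ->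
      meets (fun z => seg p m z \/ seg m q z) (interior omega) ->
      hits (polygon_edges vs) (fun z => seg p m z \/ seg m q z)).
    { intros p q m Hp Hm.
      destruct (two_piece_path_crosses_boundary omega p m q Hp Hm) as [y [Hy Hby]].
      apply Hbd in Hby as [i [Hi Hedge]].
      exists (vtx vs i, vtx vs (S i)). split.
      - apply in_map_iff. exists i. split; [reflexivity | apply in_seq; lia].
      - exists y. split; assumption. }
    intros p q Hp _ H1 H2. split; apply Hhit; assumption.
Qed.

Lemma minimum_skeleton_exists (omega : pt -> Prop) S0 :
  skeleton omega S0 -> exists S, minimum_skeleton omega S.
Proof.
  intros HS0.
  destruct (dec_inh_nat_subset_has_unique_least_element
              (fun n => exists S, skeleton omega S /\ length S = n))
    as [n [[[S [HS Hlen]] Hleast] _]].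
  - intros n. apply classic.
  - exists (length S0). exists S0. split; [exact HS0 | reflexivity].
  - exists S. split; [exact HS|]. intros S' HS'. rewrite Hlen. apply Hleast. exists S'. split; [exact HS' | reflexivity].
Qed.

Lemma vtx_succ_neq (vs : list pt) i : (1 < length vs)%nat -> NoDup vs ->
  (i < length vs)%nat -> vtx vs i <> vtx vs (S i).
Proof.
  intros Hlen Hnd Hi Heq. unfold vtx in Heq.
  rewrite (Nat.mod_small i) in Heq by exact Hi.
  apply (proj1 (NoDup_nth vs (0, 0)) Hnd) in Heq;
    [| exact Hi | apply Nat.mod_upper_bound; lia].
  destruct (Nat.lt_ge_cases (S i) (length vs)) as [Hs|Hs].
  - rewrite Nat.mod_small in Heq by exact Hs. lia.
  - replace (S i) with (length vs) in Heq by lia. rewrite Nat.Div0.mod_same in Heq. lia.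
Qed.

Lemma point_on_nondegenerate_seg (vs : list pt) (omega : pt -> Prop) a :
  simple_polygon vs -> polygon_region vs omega -> omega a ->
  exists c d, c <> d /\ (forall x, seg c d x -> omega x) /\ seg c d a.
Proof.
  intros [Hlen [Hnd _]] [Hcl [_ [Hbd _]]] Ha.
  destruct (classic (interior omega a)) as [[r [Hr Hball]]|Hni].
  - exists a, (fst a + r / 2, snd a). split; [|split].
    + intros Heq. apply (f_equal fst) in Heq. simpl in Heq. lra.
    + intros x [t [Ht [X1 X2]]]. apply Hball. unfold ball_in. simpl in *.
      rewrite X1, X2. split; apply Rabs_def1; nra.
    + apply seg_start.
  - assert (Hb : boundary omega a).
    { intros e He. split.
      - exists a. split; [apply ball_in_center, He | exact Ha].
      - apply not_interior_near; assumption. }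
    apply Hbd in Hb as [i [Hi Hedge]].
    exists (vtx vs i), (vtx vs (S i)). split; [|split].
    + apply vtx_succ_neq; [lia | exact Hnd | exact Hi].
    + intros x Hx. apply boundary_sub; [exact Hcl|]. apply Hbd. exists i. split; assumption.
    + exact Hedge.
Qed.

Lemma inside_seg_in_max_vis_edge (vs : list pt) (omega : pt -> Prop) a b :
  simple_polygon vs -> polygon_region vs omega -> (forall x, seg a b x -> omega x) ->
  exists c d, max_vis_edge omega c d /\ forall x, seg a b x -> seg c d x.
Proof.
  intros Hsp Hreg Hin. pose proof Hreg as [Hcl [Hbdd _]].
  destruct (classic (a = b)) as [<-|Hab].
  - destruct (point_on_nondegenerate_seg vs omega a Hsp Hreg) as [c0 [d0 [Hcd [Hin0 Ha]]]].
    { apply Hin, seg_start. }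
    destruct (seg_in_max_vis_edge omega Hcl Hbdd c0 d0 Hcd Hin0) as [c [d [Hmax Hsub]]].
    exists c, d. split; [exact Hmax|]. intros x Hx. apply seg_degenerate in Hx as ->. apply Hsub, Ha.
  - apply seg_in_max_vis_edge; assumption.
Qed.

Lemma list_refine {T : Type} (P Q : T -> Prop) (Rel : T -> T -> Prop) (l : list T) :
  (forall s, P s -> exists s', Q s' /\ Rel s s') -> (forall s, In s l -> P s) ->
  exists l', length l' = length l /\ (forall s', In s' l' -> Q s') /\
    forall s, In s l -> exists s', In s' l' /\ Rel s s'.
Proof.
  intros Hrefine. induction l as [|s l IH]; intros Hl.
  - exists nil. repeat split; intros; contradiction.
  - destruct IH as [l' [Hlen [HQ Hcov]]]; [intros s' Hs'; apply Hl; right; exact Hs'|].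
    destruct (Hrefine s) as [s' [HQs' HRs']]; [apply Hl; left; reflexivity|].
    exists (s' :: l'). split; [simpl; f_equal; exact Hlen|]. split.
    + intros t [<-|Ht]; [exact HQs' | apply HQ, Ht].
    + intros t [<-|Ht].
      * exists s'. split; [left; reflexivity | exact HRs'].
      * destruct (Hcov t Ht) as [t' [Ht' HRt]]. exists t'. split; [right; exact Ht' | exact HRt].
Qed.

Definition seg_sub (s s' : pt * pt) : Prop :=
  forall x, seg (fst s) (snd s) x -> seg (fst s') (snd s') x.

Lemma skeleton_refine (omega : pt -> Prop) S S' :
  skeleton omega S -> inside omega S' ->
  (forall s, In s S -> exists s', In s' S' /\ seg_sub s s') -> skeleton omega S'.
Proof.
  intros [_ Hskel] Hin' Hcov. split; [exact Hin'|].
  assert (Hhits : forall P, hits S P -> hits S' P).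
  { intros P [s [Hs [x [Hx HPx]]]]. destruct (Hcov s Hs) as [s' [Hs' Hsub]].
    exists s'. split; [exact Hs'|]. exists x. split; [apply Hsub, Hx | exact HPx]. }
  intros p q Hp Hq H1 H2. destruct (Hskel p q Hp Hq H1 H2) as [Hh1 Hh2].
  split; apply Hhits; assumption.
Qed.

Lemma minimum_skeleton_refine (omega : pt -> Prop) S S' :
  minimum_skeleton omega S -> inside omega S' -> length S' = length S ->
  (forall s, In s S -> exists s', In s' S' /\ seg_sub s s') -> minimum_skeleton omega S'.
Proof.
  intros [HS Hmin] Hin' Hlen Hcov. split.
  - apply skeleton_refine with S; assumption.
  - intros S'' HS''. rewrite Hlen. apply Hmin, HS''.
Qed.

Theorem lemma1 (omega : pt -> Prop) :
  rect_convex omega ->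
  exists S : list (pt * pt),
    minimum_skeleton omega S /\
    forall s, In s S -> max_vis_edge omega (fst s) (snd s).
Proof.
  intros [[vs [Hsp [_ [Hreg _]]]] _].
  destruct (minimum_skeleton_exists omega _ (polygon_edges_skeleton vs omega Hreg)) as [S HS].
  destruct (list_refine (fun s => forall x, seg (fst s) (snd s) x -> omega x)
              (fun s' => max_vis_edge omega (fst s') (snd s')) seg_sub S)
    as [S' [Hlen [Hmax Hcov]]].
  - intros [a b] Hab.
    destruct (inside_seg_in_max_vis_edge vs omega a b Hsp Hreg Hab) as [c [d [Hcd Hsub]]].
    exists (c, d). split; assumption.
  - exact (proj1 (proj1 HS)).
  - exists S'. split; [|exact Hmax].
    apply minimum_skeleton_refine with S; try assumption.
    intros s' Hs'. apply (Hmax s' Hs').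
Qed.
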